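(* Let $n$ and $m$ be integers with $n\geq 5$ and $m\geq 5$. For each $G\in T_{n,m}\setminus T_{n,m}^*$ there exists $H\in T_{n,m}^*$ that is $3$-stronger than $G$.
   Context: All graphs are finite, simple and undirected. A two-terminal graph is a graph $G$ together with two distinguished vertices $s,t$ (the terminals). $T_{n,m}$ denotes the set of all pairwise nonisomorphic (with isomorphisms preserving the set of terminals) two-terminal graphs with $n$ vertices and $m$ edges. Two vertices $u,v$ are true twins if $N[u]=N[v]$ (closed neighborhoods). For a positive integer $d$, a $d$-pathset of a two-terminal graph $G$ is a spanning subgraph of $G$ containing a path of length (number of edges) at most $d$ joining $s$ and $t$; $N_i^d(G)$ is the number of $d$-pathsets of $G$ with exactly $i$ edges. An edge $e$ of $G$ is $d$-irrelevant if for every $d$-pathset $H$ of $G$ containing $e$, $H-e$ is also a $d$-pathset. $T_{n,m}^*$ is the set of graphs in $T_{n,m}$ with no $3$-irrelevant edges whose terminals are true twins. For $G,H\in T_{n,m}$, $H$ is $d$-stronger than $G$ if $N_i^d(H)\geq N_i^d(G)$ for every $i\in\{1,\ldots,m\}$ and $N_j^d(H)>N_j^d(G)$ for some $j\in\{1,\ldots,m\}$. *)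

From mathcomp Require Import all_boot.
Set Implicit Arguments. Unset Strict Implicit. Unset Printing Implicit Defensive.

Definition simple_edges (n : nat) (E : {set {set 'I_n}}) : bool :=
  [forall e in E, #|e| == 2].

Definition two_terminal (n : nat) (E : {set {set 'I_n}}) (s t : 'I_n) : bool :=
  simple_edges E && (s != t).

Definition has_st_path (n : nat) (d : nat) (F : {set {set 'I_n}}) (s t : 'I_n)
  : bool :=
  [exists k : 'I_d.+1, exists p : k.-tuple 'I_n,
    [&& path (fun x y => [set x; y] \in F) s p,
        last s p == t &
        uniq (s :: p)]].

Definition is_pathset (n d : nat) (E : {set {set 'I_n}}) (s t : 'I_n)
  (F : {set {set 'I_n}}) : Prop :=
  F \subset E /\ has_st_path d F s t.

Definition Ncount (n d : nat) (E : {set {set 'I_n}}) (s t : 'I_n) (i : nat)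
  : nat :=
  #|[set F : {set {set 'I_n}} |
      (F \subset E) && (#|F| == i) && has_st_path d F s t]|.

Definition irrelevant (n d : nat) (E : {set {set 'I_n}}) (s t : 'I_n)
  (e : {set 'I_n}) : Prop :=
  e \in E /\
  forall H : {set {set 'I_n}},
    is_pathset d E s t H -> e \in H -> is_pathset d E s t (H :\ e).

Definition closed_nbhd (n : nat) (E : {set {set 'I_n}}) (v : 'I_n)
  : {set 'I_n} :=
  v |: [set u | [set u; v] \in E].

Definition true_twins (n : nat) (E : {set {set 'I_n}}) (u v : 'I_n) : Prop :=
  closed_nbhd E u = closed_nbhd E v.

(* Membership in T^*_{n,m} (given that G is in T_{n,m}): no 3-irrelevant
   edges and the terminals are true twins. *)
Definition in_Tstar (n : nat) (E : {set {set 'I_n}}) (s t : 'I_n) : Prop :=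
  (forall e, ~ irrelevant 3 E s t e) /\ true_twins E s t.

Definition stronger (n d m : nat)
  (EH : {set {set 'I_n}}) (sH tH : 'I_n)
  (EG : {set {set 'I_n}}) (sG tG : 'I_n) : Prop :=
  (forall i, 1 <= i <= m -> Ncount d EG sG tG i <= Ncount d EH sH tH i) /\
  (exists j, 1 <= j <= m /\ Ncount d EG sG tG j < Ncount d EH sH tH j).

From mathcomp Require Import all_boot fingroup perm.
From Stdlib Require Import Classical_Prop.
Set Implicit Arguments. Unset Strict Implicit. Unset Printing Implicit Defensive.

(* Say that E' improves E if E' is simple, has as many edges, at least as many
   3-pathsets of every size and strictly more of some size.  Among the edge sets
   dominating a given one, one with the largest total number of 3-pathsets has
   no improvement; hence it suffices to improve every simple E with at least
   five edges outside T*.  The s-t paths of length at most 3 are s-t, s-a-t and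
   s-a-b-t, and every improvement is a size-preserving injection of 3-pathsets
   missing some 3-pathset of the new graph:
   - if st is absent, exchange any edge for st;
   - if sa, ab, bt are present but at is not, exchange ab for at;
   - if e is 3-irrelevant and exchanging it for an absent edge completes a short
     path, do so;
   - otherwise the edges at s and t are st, e and those of at most one path
     s-w-t, so five edges give an inner edge f <> e, and some c has sc, ct
     outside E - e; replacing f and e by sc and ct, by one of two exchanges
     depending on how F meets f and e, is injective and misses {sc, ct}.
   If the terminals are not twins, a pendant edge at s or t either allows the
   second exchange or is itself 3-irrelevant. *)

Lemma set2_eq (T : finType) (x y u v : T) :
  [set x; y] = [set u; v] -> (x = u /\ y = v) \/ (x = v /\ y = u).
Proof.
move=> xy_uv.
have := set21 x y; have := set22 x y; have := set21 u v; have := set22 u v.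
rewrite -{1 2}xy_uv {3 4}xy_uv !inE.
by do 4!case/orP=> /eqP ?; subst; auto.
Qed.

Lemma card_set4_le (T : finType) (a b c d : T) : #|[set a; b; c; d]| <= 4.
Proof.
have -> : [set a; b; c; d] = [set x in [:: a; b; c; d]] by apply/setP => x; rewrite !inE !orbA.
by rewrite cardsE card_size.
Qed.

Ltac edge_cases :=
  repeat match goal with
  | H : is_true (_ || _) |- _ => case/orP: H => H
  | H : is_true (_ && _) |- _ => let H' := fresh H in case/andP: H => H H'
  end;
  repeat match goal with
  | H : is_true ([set _; _] == [set _; _]) |- _ => move/eqP/set2_eq: H => [[? ?]|[? ?]]
  | H : is_true (?x == ?y) |- _ => is_var x; move/eqP: H => H; subst x
  | H : is_true (?x == ?y) |- _ => is_var y; move/eqP: H => H; subst y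
  end; subst;
  (* [subst] cannot eliminate section variables such as the terminals *)
  try match goal with
  | H : is_true (?x != ?x) |- _ => by move: (H); rewrite eqxx
  | H : is_true (?x == ?y), H' : is_true (?x != ?y) |- _ => by move: (H'); rewrite (eqP H) eqxx
  | H : is_true (?x == ?y), H' : is_true (?y != ?x) |- _ => by move: (H'); rewrite (eqP H) eqxx
  end.

Ltac neq_edges := apply/negP => ?; edge_cases.

Lemma imset_permK (T : finType) (p : {perm T}) (A : {set T}) : (p^-1)%g @: (p @: A) = A.
Proof. by rewrite -imset_comp (eq_imset _ (permK p)) imset_id. Qed.

Lemma imset_setI_fixed (T : finType) (p : T -> T) (A B D : {set T}) :
    (forall g, g \in D -> p g = g) -> (forall h, h \in A -> h \notin D -> p h \notin B) ->
    D \subset B ->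
  (p @: A) :&: B = A :&: D.
Proof.
move=> p_fix p_out DB; apply/setP => g; rewrite !inE.
apply/andP/andP => [[/imsetP [h hA ->] phB] | [gA gD]].
  have [hD|hD] := boolP (h \in D); first by rewrite p_fix.
  by rewrite (negbTE (p_out h hA hD)) in phB.
by rewrite (subsetP DB g gD) -{1}(p_fix g gD) imset_f.
Qed.

Section PathsetCounting.

Variables (n d : nat) (s t : 'I_n).
Implicit Types (E F X : {set {set 'I_n}}).

Local Notation linked F := (has_st_path d F s t).

Definition pathsets E i :=
  [set F : {set {set 'I_n}} | (F \subset E) && (#|F| == i) && linked F].

Variables (E E' : {set {set 'I_n}}) (psi : {set {set 'I_n}} -> {set {set 'I_n}}).
Hypothesis psi_pathset : forall F, F \subset E -> linked F ->
  [/\ psi F \subset E', #|psi F| = #|F| & linked (psi F)].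
Hypothesis psi_inj : forall F1 F2, F1 \subset E -> linked F1 ->
  F2 \subset E -> linked F2 -> psi F1 = psi F2 -> F1 = F2.

Lemma card_imset_pathsets i : #|psi @: pathsets E i| = Ncount d E s t i.
Proof.
apply: card_in_imset => F1 F2; rewrite !inE => /andP [/andP [F1E _] F1l].
by case/andP=> /andP [F2E _] F2l; apply: psi_inj.
Qed.

Lemma imset_pathsets_sub i : psi @: pathsets E i \subset pathsets E' i.
Proof.
apply/subsetP => X /imsetP [F]; rewrite !inE => /andP [/andP [FE /eqP <-] Fl] ->.
by case: (psi_pathset FE Fl) => -> -> ->; rewrite eqxx.
Qed.

Lemma Ncount_le_inj i : Ncount d E s t i <= Ncount d E' s t i.
Proof. by rewrite -card_imset_pathsets; apply/subset_leq_card/imset_pathsets_sub. Qed.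

Lemma Ncount_lt_inj X : X \subset E' -> linked X ->
    (forall F, F \subset E -> linked F -> psi F != X) ->
  Ncount d E s t #|X| < Ncount d E' s t #|X|.
Proof.
move=> XE' Xl psi_neqX; rewrite -card_imset_pathsets; apply/proper_card/properP.
split; first exact: imset_pathsets_sub.
exists X; first by rewrite !inE XE' eqxx Xl.
apply/imsetP => [[F]]; rewrite !inE => /andP [/andP [FE _] Fl] XF.
by move: (psi_neqX F FE Fl); rewrite XF eqxx.
Qed.

End PathsetCounting.

Section PermutedPathsets.

Variables (n d : nat) (s t : 'I_n) (p : {perm {set 'I_n}}) (E : {set {set 'I_n}}).
Implicit Types (F : {set {set 'I_n}}).

Hypothesis p_linked : forall F, F \subset E -> has_st_path d F s t -> has_st_path d (p @: F) s t.

Let p_pathset F : F \subset E -> has_st_path d F s t ->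
  [/\ p @: F \subset p @: E, #|p @: F| = #|F| & has_st_path d (p @: F) s t].
Proof.
move=> FE Fl; rewrite imsetS // card_imset; last exact: perm_inj.
by split => //; apply: p_linked.
Qed.

Let p_inj F1 F2 : F1 \subset E -> has_st_path d F1 s t -> F2 \subset E ->
  has_st_path d F2 s t -> p @: F1 = p @: F2 -> F1 = F2.
Proof. by move=> _ _ _ _; apply/imset_inj/perm_inj. Qed.

Lemma Ncount_le_perm i : Ncount d E s t i <= Ncount d (p @: E) s t i.
Proof. exact: Ncount_le_inj p_pathset p_inj i. Qed.

Lemma Ncount_lt_perm F : F \subset E -> ~ has_st_path d F s t -> has_st_path d (p @: F) s t ->
  Ncount d E s t #|F| < Ncount d (p @: E) s t #|F|.
Proof.
move=> FE Fnl pFl; rewrite -(card_imset F (@perm_inj _ p)).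
apply: (Ncount_lt_inj p_pathset p_inj) => //; first exact: imsetS.
by move=> F' F'E F'l; apply: contraPneq Fnl => /(imset_inj (@perm_inj _ p)) <-.
Qed.

End PermutedPathsets.

Lemma simple_edges_set2 n (E : {set {set 'I_n}}) g :
  simple_edges E -> g \in E -> exists u v, u != v /\ g = [set u; v].
Proof. by move=> /forallP /(_ g) /implyP E2 /E2 /cards2P. Qed.

Section ShortPaths.

Variables (n : nat) (s t : 'I_n).
Hypothesis s_neq_t : s != t.
Implicit Types (a b c u v w x y : 'I_n) (e f g : {set 'I_n}) (E F Q X : {set {set 'I_n}}).

Local Notation linked F := (has_st_path 3 F s t).

Inductive short_path : {set {set 'I_n}} -> Prop :=
| short_path1 : short_path [set [set s; t]]
| short_path2 a : a != s -> a != t -> short_path [set [set s; a]; [set a; t]]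
| short_path3 a b : a != s -> a != t -> b != s -> b != t -> a != b ->
    short_path [set [set s; a]; [set a; b]; [set b; t]].

Lemma has_st_path3P F : linked F <-> exists2 Q, short_path Q & Q \subset F.
Proof.
split.
- case/existsP=> k /existsP [[p sz_p]] /= /and3P [p_path p_last p_uniq].
  case: k sz_p => [[|[|[|[|k]]]] lt_k] //= /eqP sz_p.
  + by case: p sz_p p_path p_last p_uniq => //= _ _; rewrite (negbTE s_neq_t).
  + case: p sz_p p_path p_last p_uniq => [|v [|]] //= _; rewrite andbT => st_F /eqP vt _.
    by subst v; exists [set [set s; t]]; [constructor | rewrite sub1set].
  + case: p sz_p p_path p_last p_uniq => [|a [|v [|]]] //= _.
    rewrite andbT => /andP [sa_F vt_F] /eqP vt; subst v.
    rewrite !inE !negb_or andbT => /andP [/andP [sa _] at'].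
    exists [set [set s; a]; [set a; t]]; first by constructor; rewrite // eq_sym.
    by rewrite subUset !sub1set sa_F.
  + case: p sz_p p_path p_last p_uniq => [|a [|b [|v [|]]]] //= _.
    rewrite andbT => /and3P [sa_F ab_F vt_F] /eqP vt; subst v.
    rewrite !inE !negb_or andbT => /and3P [/and3P [sa sb _] /andP [ab at'] bt].
    exists [set [set s; a]; [set a; b]; [set b; t]]; first by constructor; rewrite // eq_sym.
    by rewrite !subUset !sub1set sa_F ab_F.
- case=> Q [|a sa ta|a b sa ta sb tb ab]; rewrite ?subUset !sub1set => Q_F;
    apply/existsP.
  + exists (Ordinal (isT : 1 < 4)); apply/existsP; exists [tuple t].
    by rewrite /= Q_F !inE s_neq_t eqxx.
  + exists (Ordinal (isT : 2 < 4)); apply/existsP; exists [tuple a; t].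
    case/andP: Q_F => sa_F at_F /=.
    by rewrite sa_F at_F !inE !negb_or eq_sym sa s_neq_t ta eqxx.
  + exists (Ordinal (isT : 3 < 4)); apply/existsP; exists [tuple a; b; t].
    case/andP: Q_F => /andP [sa_F ab_F] bt_F /=.
    by rewrite sa_F ab_F bt_F !inE !negb_or eq_sym sa s_neq_t ta eq_sym sb tb ab eqxx.
Qed.

Lemma linked_subset F F' : F \subset F' -> linked F -> linked F'.
Proof.
move=> FF' /has_st_path3P [Q sQ QF]; apply/has_st_path3P; exists Q => //.
exact: subset_trans QF FF'.
Qed.

Lemma short_path_linked Q : short_path Q -> linked Q.
Proof. by move=> sQ; apply/has_st_path3P; exists Q. Qed.

Lemma linked_st : linked [set [set s; t]].
Proof. exact/short_path_linked/short_path1. Qed.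

Lemma linked2 a : a != s -> a != t -> linked [set [set s; a]; [set a; t]].
Proof. by move=> sa ta; apply/short_path_linked/short_path2. Qed.

Lemma unlinked_s F : (forall g, g \in F -> s \notin g) -> ~ linked F.
Proof.
move=> s_F /has_st_path3P [Q sQ /subsetP QF].
have [g gQ] : exists2 g, g \in Q & s \in g.
  by case: sQ => [|a|a b]; [exists [set s; t] | exists [set s; a] ..];
    rewrite !inE ?eqxx.
by apply/negP: (s_F g (QF g gQ)).
Qed.

Lemma unlinked_t F : (forall g, g \in F -> t \notin g) -> ~ linked F.
Proof.
move=> t_F /has_st_path3P [Q sQ /subsetP QF].
have [g gQ] : exists2 g, g \in Q & t \in g.
  by case: sQ => [|a|a b]; [exists [set s; t] | exists [set a; t] | exists [set b; t]];
    rewrite !inE ?eqxx ?orbT.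
by apply/negP: (t_F g (QF g gQ)).
Qed.

Lemma unlinked0 : ~ linked set0.
Proof. by apply: unlinked_s => g; rewrite inE. Qed.

Lemma linked1 g : linked [set g] -> g = [set s; t].
Proof.
by case/has_st_path3P=> Q [|a sa ta|a b sa ta sb tb ab];
  rewrite ?subUset !sub1set !inE => Q_g; edge_cases.
Qed.

Lemma short_path_minimal Q f : short_path Q -> f \in Q -> ~ linked (Q :\ f).
Proof.
case=> [|a sa ta|a b sa ta sb tb ab]; rewrite !inE => fQ linked_Qf; edge_cases;
  try by (apply: (unlinked_s _ linked_Qf) + apply: (unlinked_t _ linked_Qf));
         move=> g; rewrite !inE => ?; edge_cases; rewrite !inE; neq_edges.
case/has_st_path3P: linked_Qf => Q' [|a' sa' ta'|a' b' sa' ta' sb' tb' ab'];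
  rewrite ?subUset !sub1set !inE => Q_F; edge_cases.
Qed.

Lemma short_path_inner Q x y : short_path Q -> [set x; y] \in Q ->
  x != s -> x != t -> y != s -> y != t ->
  ([set s; x] \in Q /\ [set y; t] \in Q) \/ ([set s; y] \in Q /\ [set x; t] \in Q).
Proof.
move=> + + xs xt ys yt.
case=> [|a sa ta|a b sa ta sb tb ab]; rewrite !inE => xy_Q; edge_cases;
  by (left + right); rewrite !eqxx ?orbT.
Qed.

Lemma irrelevantI E e : e \in E ->
  (forall Q, short_path Q -> Q \subset E -> e \notin Q) -> irrelevant 3 E s t e.
Proof.
move=> eE e_free; split => // F [FE /has_st_path3P [Q sQ QF]] _; split.
  exact: subset_trans (subD1set F e) FE.
apply/has_st_path3P; exists Q => //; have eQ := e_free Q sQ (subset_trans QF FE).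
by apply/subsetP => g gQ; rewrite !inE (subsetP QF _ gQ) andbT; apply: contraNneq eQ => <-.
Qed.

Lemma irrelevant_short_path E e Q :
  irrelevant 3 E s t e -> short_path Q -> Q \subset E -> e \notin Q.
Proof.
case=> _ e_irr sQ QE; apply/negP => eQ.
have [_] := e_irr Q (conj QE (short_path_linked sQ)) eQ.
exact: short_path_minimal.
Qed.

Lemma irrelevant_neq_st E e : irrelevant 3 E s t e -> [set s; t] \in E -> e != [set s; t].
Proof.
move=> e_irr stE; have := irrelevant_short_path e_irr short_path1.
by rewrite sub1set stE inE => /(_ isT).
Qed.

Lemma irrelevant_neq_path2 E e w : irrelevant 3 E s t e -> w != s -> w != t ->
  [set s; w] \in E -> [set w; t] \in E -> e != [set s; w] /\ e != [set w; t].
Proof.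
move=> e_irr ws wt swE wtE; have := irrelevant_short_path e_irr (short_path2 ws wt).
by rewrite subUset !sub1set swE wtE !inE negb_or => /(_ isT) /andP.
Qed.

Lemma linked_setD1_irrelevant E e F :
  irrelevant 3 E s t e -> F \subset E -> linked F -> linked (F :\ e).
Proof.
case=> _ e_irr FE Fl; have [eF|eF] := boolP (e \in F).
  by case: (e_irr F (conj FE Fl) eF).
apply: linked_subset Fl; apply/subsetP => g gF.
by rewrite !inE gF andbT; apply: contraNneq eF => <-.
Qed.

Definition improves E E' :=
  [/\ simple_edges E', #|E'| = #|E|, forall i, Ncount 3 E s t i <= Ncount 3 E' s t i &
      exists2 j, 0 < j <= #|E| & Ncount 3 E s t j < Ncount 3 E' s t j].

Lemma improves_tperm E e d X : simple_edges E -> e \in E -> d \notin E -> #|d| = 2 ->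
    (forall F, F \subset E -> linked F -> linked (tperm e d @: F)) ->
    X \subset E -> ~ linked X -> linked (tperm e d @: X) ->
  improves E (tperm e d @: E).
Proof.
move=> E_simple eE dE d2 swap_linked XE Xnl pXl; split.
- apply/forallP => h; apply/implyP => /imsetP [g gE ->].
  case: tpermP => [_ | gd | _ _]; first by rewrite d2.
    by rewrite -gd gE in dE.
  exact: (implyP (forallP E_simple g) gE).
- exact/card_imset/perm_inj.
- exact: Ncount_le_perm.
- exists #|X|; last exact: Ncount_lt_perm.
  rewrite subset_leq_card // andbT card_gt0.
  by apply: contraPneq pXl => ->; rewrite imset0; apply: unlinked0.
Qed.

Lemma subset_imset_fixed (p : {perm {set 'I_n}}) Q F :
  Q \subset F -> (forall g, g \in Q -> p g = g) -> Q \subset p @: F.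
Proof.
move=> /subsetP QF p_fix; apply/subsetP => g gQ; rewrite -(p_fix g gQ).
by apply/imset_f/QF.
Qed.

Lemma improves_add_st E e : simple_edges E -> e \in E -> [set s; t] \notin E ->
  improves E (tperm e [set s; t] @: E).
Proof.
move=> E_simple eE stE; apply: (improves_tperm (X := [set e])) => //.
- by rewrite cards2 s_neq_t.
- move=> F FE Fl; have [eF|eF] := boolP (e \in F).
    by apply: linked_subset linked_st; rewrite sub1set; apply/imsetP; exists e; rewrite ?tpermL.
  apply: linked_subset Fl; apply: subset_imset_fixed => // g gF; apply: tpermD.
    by apply: contraNneq eF => ->.
  by apply: contraNneq stE => ->; apply: (subsetP FE).
- by rewrite sub1set.
- by move/linked1 => est; rewrite -est eE in stE.
- by rewrite imset_set1 tpermL; apply: linked_st.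
Qed.

Lemma improves_shortcut E a b : simple_edges E ->
    a != s -> a != t -> b != s -> b != t -> a != b ->
    [set s; a] \in E -> [set a; t] \notin E -> [set b; t] \in E -> [set a; b] \in E ->
  improves E (tperm [set a; b] [set a; t] @: E).
Proof.
move=> E_simple sa ta sb tb ab saE atE btE abE.
have ab_sa : [set a; b] != [set s; a] by neq_edges.
have at_sa : [set a; t] != [set s; a] by neq_edges.
apply: (improves_tperm (X := [set [set s; a]; [set a; b]])) => //.
- by rewrite cards2 ta.
- move=> F FE /has_st_path3P [Q sQ QF].
  have QE := subset_trans QF FE.
  have [abQ|abQ] := boolP ([set a; b] \in Q); last first.
    apply/has_st_path3P; exists Q => //; apply: subset_imset_fixed => // g gQ.
    apply: tpermD; first by apply: contraNneq abQ => ->.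
    by apply: contraNneq atE => ->; apply: (subsetP QE).
  case: (short_path_inner sQ abQ sa ta sb tb) => [[saQ _]|[_ atQ]]; last first.
    by rewrite (subsetP QE _ atQ) in atE.
  apply: linked_subset (linked2 sa ta); rewrite subUset !sub1set; apply/andP; split.
    by apply/imsetP; exists [set s; a]; rewrite ?tpermD // (subsetP QF).
  by apply/imsetP; exists [set a; b]; rewrite ?tpermL // (subsetP QF).
- by rewrite subUset !sub1set saE abE.
- by apply: unlinked_t => g; rewrite !inE => ?; edge_cases; rewrite !inE; neq_edges.
- by rewrite imsetU1 imset_set1 tpermL tpermD //; apply: linked2.
Qed.

Lemma improves_irrelevant_swap E e d Q : simple_edges E -> irrelevant 3 E s t e ->
    d \notin E -> #|d| = 2 -> short_path Q -> d \in Q -> Q \subset d |: (E :\ e) ->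
  improves E (tperm e d @: E).
Proof.
move=> E_simple e_irr dE d2 sQ dQ QE; have [eE _] := e_irr.
have Q_E g : g \in Q -> g != d -> g != e /\ g \in E.
  by move=> gQ gd; move: (subsetP QE g gQ); rewrite !inE (negbTE gd) => /andP [].
have FE : (Q :\ d) :|: [set e] \subset E.
  rewrite subUset sub1set eE andbT; apply/subsetP => g; rewrite !inE => /andP [gd gQ].
  by case: (Q_E g gQ gd).
apply: (improves_tperm (X := (Q :\ d) :|: [set e])) => //.
- move=> F FE' /has_st_path3P [Q' sQ' Q'F]; apply/has_st_path3P; exists Q' => //.
  apply: subset_imset_fixed => // g gQ'; have gE := subsetP (subset_trans Q'F FE') g gQ'.
  apply: tpermD; last by apply: contraNneq dE => ->.
  by apply: contraTneq gQ' => <-; apply: irrelevant_short_path e_irr sQ' (subset_trans Q'F FE').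
- move=> /(linked_setD1_irrelevant e_irr FE) Fl.
  apply: (short_path_minimal sQ dQ); apply: linked_subset Fl.
  by apply/subsetP => g; rewrite !inE => /andP [ge] /orP [//|/eqP gE]; rewrite gE eqxx in ge.
- apply/has_st_path3P; exists Q => //; apply/subsetP => g gQ.
  have [->|gd] := eqVneq g d; first by apply/imsetP; exists e; rewrite ?tpermL // !inE eqxx orbT.
  case: (Q_E g gQ gd) => ge _; apply/imsetP; exists g; last by rewrite tpermD // eq_sym.
  by rewrite !inE gd gQ.
Qed.

Lemma pendant_improvable_or_irrelevant E a : simple_edges E -> a != s -> a != t ->
    [set s; a] \in E -> [set a; t] \notin E ->
  (exists E', improves E E') \/ irrelevant 3 E s t [set s; a].
Proof.
move=> E_simple sa ta saE atE.
have [/existsP [b /and5P [sb tb ab btE abE]]|no_shortcut] :=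
  boolP [exists b, [&& b != s, b != t, a != b, [set b; t] \in E & [set a; b] \in E]].
  by left; eexists; apply: improves_shortcut sb tb ab saE atE btE abE.
right; apply: irrelevantI => // Q sQ; apply: contraTN => saQ.
case: sQ saQ => [|a' sa' ta'|a' b' sa' ta' sb' tb' ab'];
  rewrite !inE ?subUset !sub1set => saQ.
- by apply/negP => _; edge_cases.
- by apply/negP => /andP [_ a't_E]; edge_cases; rewrite a't_E in atE.
apply/negP => /andP [/andP [_ ab'_E] b't_E]; edge_cases.
by apply/(negP no_shortcut)/existsP; exists b'; rewrite sb' tb' ab' b't_E ab'_E.
Qed.

Section PendantsAtE.

Variables (E : {set {set 'I_n}}) (e : {set 'I_n}).
Hypotheses (E_simple : simple_edges E) (stE : [set s; t] \in E) (e_irr : irrelevant 3 E s t e).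
Hypothesis s_pendant_e : forall a, a != s -> a != t ->
  [set s; a] \in E -> [set a; t] \notin E -> [set s; a] = e.
Hypothesis t_pendant_e : forall a, a != s -> a != t ->
  [set a; t] \in E -> [set s; a] \notin E -> [set a; t] = e.

Local Notation free c := [&& c != s, c != t, [set s; c] \notin E :\ e & [set c; t] \notin E :\ e].

Let free_s_end w : w != s -> e = [set s; w] -> free w.
Proof.
move=> ws ew; have wt : w != t.
  by apply: contraNneq (irrelevant_neq_st e_irr stE) => wt; rewrite ew wt.
rewrite ws wt !inE -ew eqxx /=; apply/negP => /andP [_ wtE].
have swE : [set s; w] \in E by rewrite -ew; case: e_irr.
by case: (irrelevant_neq_path2 e_irr ws wt swE wtE); rewrite ew eqxx.
Qed.

Let free_t_end w : w != t -> e = [set w; t] -> free w.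
Proof.
move=> wt ew; have ws : w != s.
  by apply: contraNneq (irrelevant_neq_st e_irr stE) => ws; rewrite ew ws.
rewrite ws wt !inE -ew eqxx /= andbT; apply/negP => /andP [_ swE].
have wtE : [set w; t] \in E by rewrite -ew; case: e_irr.
by case: (irrelevant_neq_path2 e_irr ws wt swE wtE); rewrite ew eqxx.
Qed.

Lemma exists_free_vertex : exists c, free c.
Proof.
have [eE _] := e_irr; case: (simple_edges_set2 E_simple eE) => u [v [uv ee]].
have [us|us] := eqVneq u s; first by subst u; exists v; apply: free_s_end; rewrite // eq_sym.
have [vs|vs] := eqVneq v s; first by subst v; exists u; apply: free_s_end; rewrite // ee setUC.
have [vt|vt] := eqVneq v t; first by subst v; exists u; apply: free_t_end.
have [ut|ut] := eqVneq u t; first by subst u; exists v; apply: free_t_end; rewrite // ee setUC.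
have balanced w : w != s -> w != t -> ([set s; w] \in E) = ([set w; t] \in E).
  move=> ws wt; apply/idP/idP => [swE|wtE]; apply/negPn/negP => nE.
    by move/eqP: (s_pendant_e ws wt swE nE); rewrite ee => ?; edge_cases.
  by move/eqP: (t_pendant_e ws wt wtE nE); rewrite ee => ?; edge_cases.
have [suE|suE] := boolP ([set s; u] \in E); last first.
  by exists u; rewrite us ut !inE -(balanced u us ut) (negbTE suE) !andbF.
have [svE|svE] := boolP ([set s; v] \in E); last first.
  by exists v; rewrite vs vt !inE -(balanced v vs vt) (negbTE svE) !andbF.
have := irrelevant_short_path e_irr (short_path3 us ut vs vt uv).
rewrite !subUset !sub1set suE -ee (balanced v vs vt) in svE *.
by rewrite svE !inE eqxx orbT andbT; case: e_irr => -> _ /(_ isT).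
Qed.


Local Notation common w := [&& w != s, w != t, [set s; w] \in E & [set w; t] \in E].

Lemma exists_inner_edge : 5 <= #|E| ->
    (forall x y, x != y -> common x -> common y -> [set x; y] \in E) ->
  exists x y, [/\ [&& x != y, x != s, x != t, y != s & y != t], [set x; y] \in E & [set x; y] != e].
Proof.
move=> E_big common_adj.
have [/existsP [x /existsP [y /and5P [xy xs xt ys /and3P [yt xyE xye]]]]|] :=
  boolP [exists x, exists y, [&& x != y, x != s, x != t, y != s, y != t,
                              [set x; y] \in E & [set x; y] != e]].
  by exists x, y; rewrite xy xs xt ys yt.
rewrite negb_exists => /forallP none_x.
have inner_e x y : x != y -> x != s -> x != t -> y != s -> y != t -> [set x; y] \in E ->
    [set x; y] = e.
  move=> xy xs xt ys yt xyE; apply: contraNeq (none_x x) => xye.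
  by apply/existsP; exists y; rewrite xy xs xt ys yt xyE xye.
have common_uniq x y : common x -> common y -> x = y.
  move=> cx cy; apply/eqP; apply/negPn/negP => xy.
  case/and4P: cx (cx) => xs xt sxE xtE cx; case/and4P: cy (cy) => ys yt syE ytE cy.
  have xyE := common_adj x y xy cx cy.
  have := irrelevant_short_path e_irr (short_path3 xs xt ys yt xy).
  rewrite !subUset !sub1set sxE xyE ytE -(inner_e x y) // !inE eqxx orbT.
  by move/(_ isT).
have [w common_w] : exists w, forall x, common x -> x = w.
  case: (pickP (fun x => common x)) => [w cw|none_c].
    by exists w => x cx; apply: common_uniq cx cw.
  by exists s => x; rewrite none_c.
suff: E \subset [set [set s; t]; e; [set s; w]; [set w; t]].
  by move/subset_leq_card/leq_trans/(_ (card_set4_le _ _ _ _)); rewrite leqNgt (leq_trans _ E_big).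
set cover := [set _; _; _; _].
have s_end z : z != s -> [set s; z] \in E -> [set s; z] \in cover.
  move=> zs szE; have [->|zt] := eqVneq z t; first by rewrite !inE eqxx.
  have [ztE|ztE] := boolP ([set z; t] \in E).
    by rewrite (common_w z) ?zs ?zt ?szE ?ztE // !inE eqxx !orbT.
  by rewrite (s_pendant_e zs zt szE ztE) !inE eqxx !orbT.
have t_end z : z != t -> [set z; t] \in E -> [set z; t] \in cover.
  move=> zt ztE; have [->|zs] := eqVneq z s; first by rewrite !inE eqxx.
  have [szE|szE] := boolP ([set s; z] \in E).
    by rewrite (common_w z) ?zs ?zt ?szE ?ztE // !inE eqxx !orbT.
  by rewrite (t_pendant_e zs zt ztE szE) !inE eqxx !orbT.
apply/subsetP => g gE; case: (simple_edges_set2 E_simple gE) => u [v [uv eg]]; subst g.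
have [us|us] := eqVneq u s; first by subst u; apply: s_end; rewrite // eq_sym.
have [vs|vs] := eqVneq v s; first by subst v; rewrite setUC in gE *; apply: s_end.
have [vt|vt] := eqVneq v t; first by subst v; apply: t_end.
have [ut|ut] := eqVneq u t.
  by subst u; rewrite setUC in gE *; apply: t_end; rewrite // eq_sym.
by rewrite (inner_e u v) // !inE eqxx !orbT.
Qed.

End PendantsAtE.

Section Reroute.

Variables (E : {set {set 'I_n}}) (e : {set 'I_n}) (x y c : 'I_n).
Hypotheses (E_simple : simple_edges E) (e_irr : irrelevant 3 E s t e).
Hypotheses (xyE : [set x; y] \in E) (xy_neq_e : [set x; y] != e).
Hypotheses (x_neq_y : x != y) (xs : x != s) (xt : x != t) (ys : y != s) (yt : y != t).
Hypotheses (cs : c != s) (ct : c != t).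

Local Notation f := [set x; y].
Local Notation sc := [set s; c].
Local Notation tc := [set c; t].

Hypotheses (scC : sc \notin E :\ f :\ e) (tcC : tc \notin E :\ f :\ e).

Let C := E :\ f :\ e.

Let eE : e \in E. Proof. by case: e_irr. Qed.

Let C_edge g : g \in C -> [/\ f != g, e != g, g \in E, sc != g & tc != g].
Proof.
move=> gC; move: (gC); rewrite !inE => /and3P [ge gf gE].
split; rewrite 1?eq_sym //.
  by apply: contraNneq scC => <-.
by apply: contraNneq tcC => <-.
Qed.

Let E_edge h : h \in E -> [\/ h \in C, h = f | h = e].
Proof.
move=> hE; have [->|hf] := eqVneq h f; first by constructor 2.
have [->|he] := eqVneq h e; first by constructor 3.
by constructor 1; rewrite !inE hf he hE.
Qed.

Let sc_neq_tc : sc != tc. Proof. by neq_edges. Qed.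
Let f_neq_tc : f != tc. Proof. by neq_edges. Qed.

(* [reroute] maps F by [swap_fe] when F :&: C is linked or e \in F.  Otherwise
   F contains f and the rest of an s-t path through f, whose first edge is
   [lead (F :&: C)], and [swap_lead] moves that edge and f to sc and tc.  The
   two cases are told apart by the image's trace on C, so [unroute] inverts. *)
Let swap_fe : {perm {set 'I_n}} := (tperm e tc * tperm f sc)%g.
Let swap_lead sg : {perm {set 'I_n}} := (tperm f tc * tperm sg sc)%g.

Let swap_fe_f : swap_fe f = sc.
Proof. by rewrite permM (@tpermD _ e) 1?eq_sym ?tpermL. Qed.
Let swap_fe_e : swap_fe e = tc.
Proof. by rewrite permM tpermL tpermD. Qed.
Let swap_fe_C g : g \in C -> swap_fe g = g.
Proof. by case/C_edge => *; rewrite permM [tperm e tc g]tpermD // tpermD. Qed.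

Let swap_lead_lead sg : f != sg -> tc != sg -> swap_lead sg sg = sc.
Proof. by move=> fsg tcsg; rewrite permM (tpermD fsg tcsg) tpermL. Qed.
Let swap_lead_f sg : sg != tc -> swap_lead sg f = tc.
Proof. by move=> sgtc; rewrite permM tpermL tpermD. Qed.
Let swap_lead_C sg g : g \in C -> sg != g -> swap_lead sg g = g.
Proof. by case/C_edge => *; rewrite permM [tperm f tc g]tpermD // tpermD. Qed.

Let via_f X := (([set s; x] \in X) && ([set y; t] \in X)) ||
               (([set s; y] \in X) && ([set x; t] \in X)).
Let lead X := if [set y; t] \in X then [set s; x] else [set s; y].

Let lead_setD1 X : lead (X :\ lead X) = lead X.
Proof.
have yt_lead : [set y; t] != lead X by rewrite /lead; case: ifP => _; neq_edges.
by rewrite [in LHS]/lead in_setD1 yt_lead.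
Qed.

Let lead_spec X : ~ linked X -> via_f X -> lead X \in X /\ ~~ via_f (X :\ lead X).
Proof.
move=> Xnl; rewrite /via_f /lead.
have no_path2 z : z != s -> z != t -> ([set s; z] \in X) && ([set z; t] \in X) = false.
  move=> zs zt; apply/negbTE/negP => /andP [szX ztX].
  by apply/Xnl/(linked_subset _ (linked2 zs zt)); rewrite subUset !sub1set szX ztX.
have sy_sx : ([set s; y] == [set s; x]) = false by apply/negbTE; neq_edges.
have sx_sy : ([set s; x] == [set s; y]) = false by apply/negbTE; neq_edges.
have yt_sx : ([set y; t] == [set s; x]) = false by apply/negbTE; neq_edges.
have xt_sx : ([set x; t] == [set s; x]) = false by apply/negbTE; neq_edges.
have yt_sy : ([set y; t] == [set s; y]) = false by apply/negbTE; neq_edges.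
have xt_sy : ([set x; t] == [set s; y]) = false by apply/negbTE; neq_edges.
move: (no_path2 x xs xt) (no_path2 y ys yt); case: ifP => _;
  rewrite !inE ?sy_sx ?sx_sy ?yt_sx ?xt_sx ?yt_sy ?xt_sy ?eqxx /=;
  by case: ([set s; x] \in X); case: ([set s; y] \in X); case: ([set x; t] \in X).
Qed.

Let f_in_pathset F : F \subset E -> linked F -> ~ linked (F :&: C) -> f \in F.
Proof.
move=> FE Fl FCnl; apply/negPn/negP => fF.
apply/FCnl/(linked_subset _ (linked_setD1_irrelevant e_irr FE Fl)).
apply/subsetP => g; rewrite !inE => /andP [ge gF].
by rewrite gF ge (subsetP FE g gF) andbT; apply: contraNneq fF => <-.
Qed.

Let via_pathset F : F \subset E -> linked F -> ~ linked (F :&: C) -> via_f (F :&: C).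
Proof.
move=> FE Fl FCnl; case/has_st_path3P: (linked_setD1_irrelevant e_irr FE Fl) => Q sQ QF.
have QFC g : g \in Q -> g != f -> g \in F :&: C.
  move=> gQ gf; move: (subsetP QF g gQ); rewrite !inE => /andP [ge gF].
  by rewrite gF ge gf (subsetP FE g gF).
have [fQ|fQ] := boolP (f \in Q); last first.
  exfalso; apply/FCnl/has_st_path3P; exists Q => //; apply/subsetP => g gQ.
  by apply: QFC => //; apply: contraNneq fQ => <-.
by case: (short_path_inner sQ fQ xs xt ys yt) => [[h1 h2]|[h1 h2]];
  rewrite /via_f (QFC _ h1) ?(QFC _ h2) ?orbT //; neq_edges.
Qed.

Let reroute F :=
  if linked (F :&: C) || (e \in F) then swap_fe @: F else swap_lead (lead (F :&: C)) @: F.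
Let unroute X :=
  if linked (X :&: C) || via_f (X :&: C) then (swap_fe^-1)%g @: X
  else ((swap_lead (lead (X :&: C)))^-1)%g @: X.

Let E' := sc |: (tc |: C).

Let C_sub_E' g : g \in C -> g \in E'.
Proof. by move=> gC; rewrite !in_setU1 gC !orbT. Qed.

Let reroute_swap_fe F : F \subset E -> linked F -> linked (F :&: C) || (e \in F) ->
  [/\ swap_fe @: F \subset E', #|swap_fe @: F| = #|F|, linked (swap_fe @: F) &
      unroute (swap_fe @: F) = F].
Proof.
move=> FE Fl FC_or_e.
have FC : (swap_fe @: F) :&: C = F :&: C.
  apply: imset_setI_fixed => // h hF hC; case: (E_edge (subsetP FE h hF)) => [|->|->].
  - by rewrite (negbTE hC).
  - by rewrite swap_fe_f.
  - by rewrite swap_fe_e.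
split.
- apply/subsetP => _ /imsetP [h hF ->]; case: (E_edge (subsetP FE h hF)) => [hC|->|->].
  + by rewrite swap_fe_C // C_sub_E'.
  + by rewrite swap_fe_f !inE eqxx.
  + by rewrite swap_fe_e !inE eqxx orbT.
- exact/card_imset/perm_inj.
- have [FCl|FCnl] := boolP (linked (F :&: C)).
    by apply: linked_subset FCl; rewrite -FC subsetIl.
  have eF : e \in F by move: FC_or_e; rewrite (negbTE FCnl).
  have fF := f_in_pathset FE Fl (negP FCnl).
  apply: linked_subset (linked2 cs ct); rewrite subUset !sub1set -swap_fe_f -swap_fe_e.
  by rewrite !imset_f.
- rewrite /unroute FC ifT ?imset_permK //.
  have [//|FCnl] := boolP (linked (F :&: C)).
  exact: via_pathset FE Fl (negP FCnl).
Qed.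

Let reroute_swap_lead F : F \subset E -> linked F -> ~~ (linked (F :&: C) || (e \in F)) ->
  let p := swap_lead (lead (F :&: C)) in
  [/\ p @: F \subset E', #|p @: F| = #|F|, linked (p @: F) & unroute (p @: F) = F].
Proof.
rewrite negb_or => FE Fl /andP [FCnl eF] p.
have fF := f_in_pathset FE Fl (negP FCnl).
have [leadFC viaFC] := lead_spec (negP FCnl) (via_pathset FE Fl (negP FCnl)).
set sg := lead (F :&: C) in p leadFC viaFC *.
have [sgF sgC] : sg \in F /\ sg \in C by move: leadFC; rewrite inE => /andP [].
have [f_sg _ _ _ tc_sg] := C_edge sgC.
have FC : (p @: F) :&: C = (F :&: C) :\ sg.
  rewrite -setIDA; apply: imset_setI_fixed; last exact: subsetDl.
  - by move=> g; rewrite in_setD1 => /andP [gsg gC]; apply: swap_lead_C; rewrite // eq_sym.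
  - move=> h hF; rewrite in_setD1 negb_and negbK => /orP [/eqP ->|hC].
      by rewrite swap_lead_lead.
    case: (E_edge (subsetP FE h hF)) => [|->|hE]; first by rewrite (negbTE hC).
      by rewrite swap_lead_f 1?eq_sym.
    by rewrite -hE hF in eF.
split.
- apply/subsetP => _ /imsetP [h hF ->]; case: (E_edge (subsetP FE h hF)) => [hC|->|hE].
  + have [->|hsg] := eqVneq h sg; first by rewrite swap_lead_lead // !inE eqxx.
    by rewrite swap_lead_C 1?eq_sym // C_sub_E'.
  + by rewrite swap_lead_f 1?eq_sym // !inE eqxx orbT.
  + by rewrite -hE hF in eF.
- exact/card_imset/perm_inj.
- apply: linked_subset (linked2 cs ct); rewrite subUset !sub1set.
  by rewrite -{1}(swap_lead_lead f_sg tc_sg) -(@swap_lead_f sg) 1?eq_sym // !imset_f.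
- rewrite /unroute FC ifF ?lead_setD1 ?imset_permK //.
  apply/negbTE; rewrite negb_or viaFC andbT.
  by apply/negP => /(linked_subset (subsetDl _ _)); apply/negP.
Qed.

Let reroute_pathset F : F \subset E -> linked F ->
  [/\ reroute F \subset E', #|reroute F| = #|F|, linked (reroute F) & unroute (reroute F) = F].
Proof.
move=> FE Fl; rewrite /reroute; case: ifPn => cond.
  exact: reroute_swap_fe.
exact: reroute_swap_lead.
Qed.

Lemma improves_reroute : improves E (sc |: (tc |: (E :\ f :\ e))).
Proof.
have cardE : #|E| = #|C|.+2.
  by rewrite (cardsD1 f E) xyE (cardsD1 e (E :\ f)) in_setD1 eq_sym xy_neq_e eE.
have cardE' : #|E'| = #|C|.+2.
  by rewrite !cardsU1 in_setU1 (negbTE sc_neq_tc) (negbTE scC) (negbTE tcC).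
have reroute_inj F1 F2 : F1 \subset E -> linked F1 -> F2 \subset E -> linked F2 ->
    reroute F1 = reroute F2 -> F1 = F2.
  move=> F1E F1l F2E F2l eq12.
  by case: (reroute_pathset F1E F1l) (reroute_pathset F2E F2l) => _ _ _ <- [_ _ _ <-]; rewrite eq12.
have reroute_ok F : F \subset E -> linked F ->
    [/\ reroute F \subset E', #|reroute F| = #|F| & linked (reroute F)].
  by move=> FE Fl; case: (reroute_pathset FE Fl).
split.
- apply/forallP => g; apply/implyP; rewrite !in_setU1 => /or3P [/eqP ->|/eqP ->|gC].
  + by rewrite cards2 [s == c]eq_sym cs.
  + by rewrite cards2 ct.
  + by case: (C_edge gC) => _ _ gE _ _; apply: (implyP (forallP E_simple g) gE).
- by rewrite cardE cardE'.
- exact: Ncount_le_inj reroute_ok reroute_inj.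
- exists 2; first by rewrite cardE.
  have := Ncount_lt_inj reroute_ok reroute_inj (X := [set sc; tc]).
  rewrite cards2 sc_neq_tc; apply.
  + by rewrite subUset !sub1set !inE !eqxx orbT.
  + exact: linked2.
  move=> F FE Fl; apply/eqP => reroute_F.
  have f_sy : f != [set s; y] by neq_edges.
  have tc_sy : tc != [set s; y] by neq_edges.
  have X_C : [set sc; tc] :&: C = set0.
    apply/setP => g; rewrite in_setI in_set2 in_set0.
    by apply/andP => [[/orP [] /eqP -> gC]]; [move: scC | move: tcC]; rewrite -/C gC.
  have : unroute [set sc; tc] = [set [set s; y]; f].
    rewrite /unroute X_C ifF; last first.
      by apply/negbTE; rewrite negb_or /via_f !inE /= andbT; apply/negP/unlinked0.
    have -> : [set sc; tc] = swap_lead [set s; y] @: [set [set s; y]; f].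
      by rewrite imsetU1 imset_set1 (swap_lead_lead f_sy tc_sy) swap_lead_f // eq_sym.
    by rewrite /lead inE imset_permK.
  rewrite -reroute_F; case: (reroute_pathset FE Fl) => _ _ _ -> F_eq.
  by apply: (unlinked_t _ Fl) => g; rewrite F_eq !inE => /orP [] /eqP ->; rewrite !inE; neq_edges.
Qed.

End Reroute.

Lemma irrelevant_improvable E e : simple_edges E -> 5 <= #|E| -> [set s; t] \in E ->
  irrelevant 3 E s t e -> exists E', improves E E'.
Proof.
move=> E_simple E_big stE e_irr; have [eE _] := e_irr.
have [/existsP [a /and5P [sa ta saE atE sae]]|no_s_pendant] :=
  boolP [exists a, [&& a != s, a != t, [set s; a] \in E, [set a; t] \notin E & [set s; a] != e]].
  exists (tperm e [set a; t] @: E).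
  apply: (improves_irrelevant_swap (Q := [set [set s; a]; [set a; t]])) => //.
  - by rewrite cards2 ta.
  - exact: short_path2.
  - by rewrite !inE eqxx orbT.
  - by rewrite subUset !sub1set !inE eqxx saE sae ?orbT.
have [/existsP [a /and5P [sa ta atE saE ate]]|no_t_pendant] :=
  boolP [exists a, [&& a != s, a != t, [set a; t] \in E, [set s; a] \notin E & [set a; t] != e]].
  exists (tperm e [set s; a] @: E).
  apply: (improves_irrelevant_swap (Q := [set [set s; a]; [set a; t]])) => //.
  - by rewrite cards2 eq_sym sa.
  - exact: short_path2.
  - by rewrite !inE eqxx.
  - by rewrite subUset !sub1set !inE eqxx atE ate ?orbT.
have [/existsP [x /existsP [y /and4P [xy /and4P [xs xt sxE xtE] /and4P [ys yt syE ytE] xyE]]]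
     |common_nonadj] := boolP [exists x, exists y,
    [&& x != y, [&& x != s, x != t, [set s; x] \in E & [set x; t] \in E],
                [&& y != s, y != t, [set s; y] \in E & [set y; t] \in E] & [set x; y] \notin E]].
  have [exs _] := irrelevant_neq_path2 e_irr xs xt sxE xtE.
  have [_ eyt] := irrelevant_neq_path2 e_irr ys yt syE ytE.
  exists (tperm e [set x; y] @: E).
  apply: (improves_irrelevant_swap (Q := [set [set s; x]; [set x; y]; [set y; t]])) => //.
  - by rewrite cards2 xy.
  - exact: short_path3.
  - by rewrite !inE eqxx orbT.
  - by rewrite !subUset !sub1set !inE eqxx sxE ytE ![_ == e]eq_sym exs eyt ?orbT.
have s_pendant_e a : a != s -> a != t -> [set s; a] \in E -> [set a; t] \notin E ->
    [set s; a] = e.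
  move=> sa ta saE atE; apply: contraNeq no_s_pendant => sae.
  by apply/existsP; exists a; rewrite sa ta saE atE sae.
have t_pendant_e a : a != s -> a != t -> [set a; t] \in E -> [set s; a] \notin E ->
    [set a; t] = e.
  move=> sa ta atE saE; apply: contraNeq no_t_pendant => ate.
  by apply/existsP; exists a; rewrite sa ta saE atE ate.
have common_adj x y : x != y ->
    [&& x != s, x != t, [set s; x] \in E & [set x; t] \in E] ->
    [&& y != s, y != t, [set s; y] \in E & [set y; t] \in E] -> [set x; y] \in E.
  move=> xy cx cy; apply: contraNT common_nonadj => xyE.
  by apply/existsP; exists x; apply/existsP; exists y; rewrite xy cx cy xyE.
have [c /and4P [cs ct scE tcE]] := exists_free_vertex E_simple stE e_irr s_pendant_e t_pendant_e.
have [x [y [/and5P [xy xs xt ys yt] xyE xye]]] :=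
  exists_inner_edge E_simple e_irr s_pendant_e t_pendant_e E_big common_adj.
have subE : E :\ [set x; y] :\ e \subset E :\ e by apply/setSD/subD1set.
eexists; apply: (improves_reroute E_simple e_irr xyE xye xy xs xt ys yt cs ct).
  by apply: contra scE; apply: (subsetP subE).
by apply: contra tcE; apply: (subsetP subE).
Qed.

End ShortPaths.

Lemma linked_sym n (s t : 'I_n) F : s != t -> has_st_path 3 F s t -> has_st_path 3 F t s.
Proof.
move=> s_neq_t; have t_neq_s : t != s by rewrite eq_sym.
case/(has_st_path3P s_neq_t) => Q [|a sa ta|a b sa ta sb tb ab];
  rewrite ?subUset !sub1set => QF; apply/(has_st_path3P t_neq_s).
- by exists [set [set t; s]]; [apply: short_path1 | rewrite sub1set setUC].
- exists [set [set t; a]; [set a; s]]; first exact: short_path2.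
  by rewrite subUset !sub1set setUC [[set a; s]]setUC andbC.
- exists [set [set t; b]; [set b; a]; [set a; s]].
    by apply: short_path3; rewrite // eq_sym.
  rewrite !subUset !sub1set setUC [[set b; a]]setUC [[set a; s]]setUC.
  by case/andP: QF => /andP [-> ->] ->.
Qed.

Lemma Ncount3_sym n (s t : 'I_n) E i : s != t -> Ncount 3 E s t i = Ncount 3 E t s i.
Proof.
move=> s_neq_t; apply: eq_card => F; rewrite !inE; congr (_ && _).
by apply/idP/idP; apply: linked_sym; rewrite // eq_sym.
Qed.

Lemma improves_sym n (s t : 'I_n) E E' : s != t -> improves s t E E' -> improves t s E E'.
Proof.
move=> s_neq_t [E'_simple card_E' le [j j_range lt]].
have sym F i : Ncount 3 F t s i = Ncount 3 F s t i by rewrite Ncount3_sym // eq_sym.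
by split => // [i|]; [rewrite !sym | exists j; rewrite ?sym].
Qed.

Lemma irrelevant3_sym n (s t : 'I_n) E e :
  s != t -> irrelevant 3 E s t e -> irrelevant 3 E t s e.
Proof.
move=> s_neq_t [eE e_irr]; have t_neq_s : t != s by rewrite eq_sym.
split => // F [FE /(linked_sym t_neq_s) Fl] eF.
by case: (e_irr F (conj FE Fl) eF) => FeE /(linked_sym s_neq_t).
Qed.

Lemma t_pendant_improvable_or_irrelevant n (s t : 'I_n) E a : s != t -> simple_edges E ->
    a != s -> a != t -> [set a; t] \in E -> [set s; a] \notin E ->
  (exists E', improves s t E E') \/ irrelevant 3 E s t [set a; t].
Proof.
move=> s_neq_t E_simple sa ta atE saE; have t_neq_s : t != s by rewrite eq_sym.
rewrite setUC in atE *; rewrite setUC in saE.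
case: (pendant_improvable_or_irrelevant t_neq_s E_simple ta sa atE saE).
  by case=> E' /(improves_sym t_neq_s) ?; left; exists E'.
by move/(irrelevant3_sym t_neq_s); right.
Qed.

Lemma exists_improvement n (s t : 'I_n) E : s != t -> simple_edges E -> 5 <= #|E| ->
  ~ in_Tstar E s t -> exists E', improves s t E E'.
Proof.
move=> s_neq_t E_simple E_big notT.
have [stE|stE] := boolP ([set s; t] \in E); last first.
  have [e eE] : exists e, e \in E by apply/set0Pn; rewrite -card_gt0 (leq_trans _ E_big).
  by exists (tperm e [set s; t] @: E); apply: improves_add_st.
suff [//|[e e_irr]] : (exists E', improves s t E E') \/ exists e, irrelevant 3 E s t e.
  exact: irrelevant_improvable e_irr.
have [twins|not_twins] := eqVneq (closed_nbhd E s) (closed_nbhd E t).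
  case: (classic (exists e, irrelevant 3 E s t e)) => [|no_irr]; first by right.
  by case: notT; split => // e e_irr; apply: no_irr; exists e.
have [v] : exists v, (v \in closed_nbhd E s) != (v \in closed_nbhd E t).
  apply/existsP; apply: contraNT not_twins; rewrite negb_exists => /forallP same.
  by apply/eqP/setP => v; apply/eqP/negPn/same.
rewrite !inE; have [->|vs] := eqVneq v s; first by rewrite stE orbT.
have [->|vt] := eqVneq v t; first by rewrite setUC stE orbT.
rewrite /= setUC.
case: (boolP ([set s; v] \in E)) => svE; case: (boolP ([set v; t] \in E)) => vtE //= _.
  case: (pendant_improvable_or_irrelevant s_neq_t E_simple vs vt svE vtE); first by left.
  by right; exists [set s; v].
case: (t_pendant_improvable_or_irrelevant s_neq_t E_simple vs vt vtE svE); first by left.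
by right; exists [set v; t].
Qed.

Lemma ltn_sum (I : finType) (F G : I -> nat) j :
  (forall i, F i <= G i) -> F j < G j -> \sum_i F i < \sum_i G i.
Proof.
move=> FG FGj; rewrite (bigD1 j) //= [X in _ < X](bigD1 j) //= -addSn.
by apply: leq_add => //; apply: leq_sum => i _; apply: FG.
Qed.

Lemma exists_Tstar_dominating n m (s t : 'I_n) E : s != t -> 5 <= m ->
    simple_edges E -> #|E| = m ->
  exists E', [/\ simple_edges E', #|E'| = m, in_Tstar E' s t &
                 forall i, i <= m -> Ncount 3 E s t i <= Ncount 3 E' s t i].
Proof.
move=> s_neq_t m_big E_simple cardE.
pose dominating E' := [&& simple_edges E', #|E'| == m &
  [forall i : 'I_m.+1, Ncount 3 E s t i <= Ncount 3 E' s t i]].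
pose total E' := \sum_(i < m.+1) Ncount 3 E' s t i.
have dominating_E : dominating E by rewrite /dominating E_simple cardE eqxx; apply/forallP.
case: (arg_maxnP total dominating_E) => E' /and3P [E'_simple /eqP cardE' /forallP dom] E'_max.
exists E'; split => //; last by move=> i im; apply: (dom (Ordinal (im : i < m.+1))).
case: (classic (in_Tstar E' s t)) => // notT'; exfalso.
have [E'' [E''_simple cardE'' le [j /andP [j0 jm] lt]]] :=
  exists_improvement s_neq_t E'_simple (leq_trans m_big (eq_leq (esym cardE'))) notT'.
have : total E'' <= total E'.
  apply: E'_max; rewrite /dominating E''_simple cardE'' cardE' eqxx /=.
  by apply/forallP => i; apply: leq_trans (dom i) (le i).
rewrite leqNgt => /negP; apply.
have jm' : j < m.+1 by rewrite ltnS -cardE'.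
by apply: (ltn_sum (j := Ordinal jm')) => // i; apply: le.
Qed.

Theorem lemma10 (n m : nat) : 5 <= n -> 5 <= m ->
  forall (E : {set {set 'I_n}}) (s t : 'I_n),
    two_terminal E s t -> #|E| = m -> ~ in_Tstar E s t ->
    exists (E' : {set {set 'I_n}}) (s' t' : 'I_n),
      [/\ two_terminal E' s' t', #|E'| = m, in_Tstar E' s' t' &
          stronger 3 m E' s' t' E s t].
Proof.
move=> _ m_big E s t /andP [E_simple s_neq_t] cardE notT.
have [E1 [E1_simple cardE1 le1 [j /andP [j0 jm] lt1]]] :=
  exists_improvement s_neq_t E_simple (leq_trans m_big (eq_leq (esym cardE))) notT.
rewrite cardE in cardE1 jm.
have [E' [E'_simple cardE' T' dom]] := exists_Tstar_dominating s_neq_t m_big E1_simple cardE1.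
exists E', s, t; split => //; first by rewrite /two_terminal E'_simple s_neq_t.
split; first by move=> i /andP [_ im]; apply: leq_trans (le1 i) (dom i im).
by exists j; split; [rewrite j0 | apply: leq_trans lt1 (dom j jm)].
Qed.
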